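(* Let $c>0$ and let $\mathfrak{C}_c=X(\mathbb{C})\subset\widetilde{E(2)}$ be the catenoid of parameter $c$ described in the context. Then for every $\mu\in\mathbb{R}$, the intersection of $\mathfrak{C}_c$ with the plane $\{x_3=\lambda_1\lambda_2\mu\}$ is a non-empty, closed, embedded, convex curve (convex as a curve in the plane with Euclidean coordinates $(x_1,x_2)$).
   Context: $\widetilde{E(2)}$ is $\mathbb{R}^3$ with coordinates $(x_1,x_2,x_3)$ and group law $(a_1,b_1,c_1)*(a_2,b_2,c_2)=(a_1+a_2\cos c_1-b_2\sin c_1,\ b_1+a_2\sin c_1+b_2\cos c_1,\ c_1+c_2)$, with the left-invariant metric $\lambda_1^2(\cos x_3\,dx_1+\sin x_3\,dx_2)^2+\lambda_2^2(-\sin x_3\,dx_1+\cos x_3\,dx_2)^2+\frac{1}{\lambda_1^2\lambda_2^2}dx_3^2$, where either $\lambda_1>\lambda_2>0$ or $\lambda_1=\lambda_2=1$. For $c>0$: $\theta_c^+=\pi$ if $c>\sqrt2\lambda_1$, $\theta_c^+=\arccos(1-c^2/\lambda_1^2)$ if $0<c\le\sqrt2\lambda_1$; $\Omega=\{(c,\theta):c>0,\ |\theta|<\theta_c^+\}$. For $(c,\theta)\in\Omega$: $D=\sin\theta/c$; $\varphi$ is the global solution of $\varphi'(u)=\sqrt{c^2+2\cos\theta\,B(u)-D^2B(u)^2}$, $\varphi(0)=0$, with $B(u)=\lambda_1^2\cos^2\varphi(u)+\lambda_2^2\sin^2\varphi(u)$; $U>0$ is the unique number with $\varphi(U)=\pi$;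 $f$ solves $f'=DB$, $f(0)=0$; $G(u)=\int_0^u\frac{c-\varphi'(s)}{B(s)}ds$; $H(c,\theta)=Df(U)+cG(U)$; $\widetilde{\theta_c}$ is the unique $\theta\in(0,\pi/2)\cap(0,\theta_c^+)$ with $H(c,\theta)=0$. The catenoid $\mathfrak{C}_c$ is the image of $X=(x_1,x_2,x_3):\mathbb{C}\to\widetilde{E(2)}$ built with $\theta=\widetilde{\theta_c}$: $x_3(u+iv)=-\lambda_1\lambda_2Dv+\lambda_1\lambda_2G(u)$; with $A=f(u)+cv$, $M_1=c\cos x_3\cosh A-\lambda_1\lambda_2D\sin x_3\sinh A$, $M_2=c\cos x_3\sinh A-\lambda_1\lambda_2D\sin x_3\cosh A$, $M_3=c\sin x_3\sinh A+\lambda_1\lambda_2D\cos x_3\cosh A$, $M_4=c\sin x_3\cosh A+\lambda_1\lambda_2D\cos x_3\sinh A$, $x_1=-\frac{1}{(c^2+\lambda_1^2\lambda_2^2D^2)B}[\frac{1}{\lambda_1}f'\cos\varphi\,M_1-\frac{1}{\lambda_1}(c-\varphi')\sin\varphi\,M_2-\frac{1}{\lambda_2}(c-\varphi')\cos\varphi\,M_3-\frac{1}{\lambda_2}f'\sin\varphi\,M_4]$, $x_2=-\frac{1}{(c^2+\lambda_1^2\lambda_2^2D^2)B}[\frac{1}{\lambda_1}f'\cos\varphi\,M_4-\frac{1}{\lambda_1}(c-\varphi')\sin\varphi\,M_3+\frac{1}{\lambda_2}(c-\varphi')\cos\varphi\,M_2+\frac{1}{\lambda_2}f'\sin\varphi\,M_1]$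 (functions of $u$ evaluated at $u$). $X$ is a conformal minimal immersion. *)

From Stdlib Require Import Reals.
From Coquelicot Require Import Coquelicot.
Open Scope R_scope.

Definition theta_plus (l1 c : R) : R :=
  if Rlt_dec (sqrt 2 * l1) c then PI else acos (1 - c ^ 2 / l1 ^ 2).

Definition Dc (c th : R) : R := sin th / c.

Definition Bang (l1 l2 p : R) : R := l1 ^ 2 * (cos p) ^ 2 + l2 ^ 2 * (sin p) ^ 2.

Definition phid (l1 l2 c th p : R) : R :=
  sqrt (c ^ 2 + 2 * cos th * Bang l1 l2 p - (Dc c th) ^ 2 * (Bang l1 l2 p) ^ 2).

Definition is_phi_sol (l1 l2 c th : R) (phi : R -> R) : Prop :=
  phi 0 = 0 /\ forall u, is_derive phi u (phid l1 l2 c th (phi u)).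

Definition Bu (l1 l2 : R) (phi : R -> R) (u : R) : R := Bang l1 l2 (phi u).

Definition ff (l1 l2 c th : R) (phi : R -> R) (u : R) : R :=
  RInt (fun s => Dc c th * Bu l1 l2 phi s) 0 u.

Definition GG (l1 l2 c th : R) (phi : R -> R) (u : R) : R :=
  RInt (fun s => (c - phid l1 l2 c th (phi s)) / Bu l1 l2 phi s) 0 u.

Definition HH (l1 l2 c th : R) (phi : R -> R) (U : R) : R :=
  Dc c th * ff l1 l2 c th phi U + c * GG l1 l2 c th phi U.

(* The immersion X = (x1,x2,x3) : C = R x R -> E(2)~, z = u + i v *)
Definition X3 (l1 l2 c th : R) (phi : R -> R) (u v : R) : R :=
  - l1 * l2 * Dc c th * v + l1 * l2 * GG l1 l2 c th phi u.

Definition X12 (l1 l2 c th : R) (phi : R -> R) (u v : R) : R * R :=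
  let D := Dc c th in
  let x3 := X3 l1 l2 c th phi u v in
  let A := ff l1 l2 c th phi u + c * v in
  let B := Bu l1 l2 phi u in
  let p := phi u in
  let fp := D * B in
  let pp := phid l1 l2 c th p in
  let M1 := c * cos x3 * cosh A - l1 * l2 * D * sin x3 * sinh A in
  let M2 := c * cos x3 * sinh A - l1 * l2 * D * sin x3 * cosh A in
  let M3 := c * sin x3 * sinh A + l1 * l2 * D * cos x3 * cosh A in
  let M4 := c * sin x3 * cosh A + l1 * l2 * D * cos x3 * sinh A in
  let k := - (1 / ((c ^ 2 + l1 ^ 2 * l2 ^ 2 * D ^ 2) * B)) in
  ( k * (1 / l1 * fp * cos p * M1 - 1 / l1 * (c - pp) * sin p * M2
         - 1 / l2 * (c - pp) * cos p * M3 - 1 / l2 * fp * sin p * M4),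
    k * (1 / l1 * fp * cos p * M4 - 1 / l1 * (c - pp) * sin p * M3
         + 1 / l2 * (c - pp) * cos p * M2 + 1 / l2 * fp * sin p * M1) ).

Definition slice (l1 l2 c th : R) (phi : R -> R) (h : R) (p : R * R) : Prop :=
  exists u v, X3 l1 l2 c th phi u v = h /\ X12 l1 l2 c th phi u v = p.

(* S is a non-empty closed embedded (regular C^1, simple) convex curve in the
   Euclidean (x1,x2)-plane: the image of a T-periodic regular C^1 map that is
   injective on one period, and which has a supporting line at each point. *)
Definition closed_embedded_convex_curve (S : R * R -> Prop) : Prop :=
  exists (g1 g2 : R -> R) (T : R),
    0 < T /\
    (forall t, g1 (t + T) = g1 t /\ g2 (t + T) = g2 t) /\
    (forall s t, 0 <= s < T -> 0 <= t < T -> g1 s = g1 t -> g2 s = g2 t -> s = t) /\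
    (forall p, S p <-> exists t, p = (g1 t, g2 t)) /\
    (forall t, ex_derive g1 t /\ ex_derive g2 t /\
               continuous (Derive g1) t /\ continuous (Derive g2) t /\
               (Derive g1 t <> 0 \/ Derive g2 t <> 0)) /\
    (forall t, exists a b, (a <> 0 \/ b <> 0) /\
       forall s, a * (g1 s - g1 t) + b * (g2 s - g2 t) >= 0).

From Stdlib Require Import Reals Lra Lia ZArith.
From Coquelicot Require Import Coquelicot.
Open Scope R_scope.

(* On the plane [x3 = l1 l2 mu] the coordinate [v] is a function of [u], namely
   [v = (G(u) - mu) / D], so the slice is the curve [u |-> X12 (u, v(u))].  A direct
   computation shows that its velocity is a positive multiple of
   [(cx l2 sin phi + sx l1 cos phi, sx l2 sin phi - cx l1 cos phi)] with
   [(cx, sx) = (cos x3, sin x3)]; the cross product of two such vectors taken at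
   angles [p] and [q] is [l1 l2 sin (q - p)], so the tangent turns monotonically
   with [phi].  The ODE for [phi] is [PI]-periodic, whence [phi (u + U) = phi u + PI],
   and [H(c, th) = 0] makes [A = f + c v] [U]-periodic; together they give
   [X12 (u + U) = - X12 u].  So the curve is [2U]-periodic and its tangent makes
   exactly one turn per period, hence it lies strictly on one side of each of its
   tangent lines: it is embedded and convex. *)

Lemma derive_pos_lt (g dg : R -> R) (a b : R) :
  a < b -> (forall x, is_derive g x (dg x)) -> (forall x, a < x < b -> 0 < dg x) ->
  g a < g b.
Proof.
  intros hab hg hpos.
  destruct (MVT_cor2 g dg a b hab) as (x & hx & hxab).
  { intros x _. apply is_derive_Reals, hg. }
  specialize (hpos x hxab). nra.
Qed.

Lemma derive_neg_lt (g dg : R -> R) (a b : R) :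
  a < b -> (forall x, is_derive g x (dg x)) -> (forall x, a < x < b -> dg x < 0) ->
  g b < g a.
Proof.
  intros hab hg hneg.
  enough (- g a < - g b) by lra.
  apply (derive_pos_lt (fun x => - g x) (fun x => - dg x)); auto.
  - intro x. apply (is_derive_opp g), hg.
  - intros x hx. specialize (hneg x hx). lra.
Qed.

Lemma derive_zero_eq (g : R -> R) (a b : R) : (forall x, is_derive g x 0) -> g a = g b.
Proof.
  intro hg.
  assert (hlt : forall x y, x < y -> g x = g y).
  { intros x y hxy.
    destruct (MVT_cor2 g (fun _ => 0) x y hxy) as (z & hz & _).
    - intros; apply is_derive_Reals, hg.
    - lra. }
  destruct (Rtotal_order a b) as [h | [-> | h]]; auto.
  symmetry; auto.
Qed.

Lemma periodic_add_INR (F : R -> R) (T : R) :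
  (forall x, F (x + T) = F x) -> forall n x, F (x + INR n * T) = F x.
Proof.
  intros hT n. induction n as [| n IH]; intro x.
  - simpl. f_equal. ring.
  - rewrite S_INR, <- (IH x), <- (hT (x + INR n * T)). f_equal. ring.
Qed.

Lemma periodic_add_IZR (F : R -> R) (T : R) :
  (forall x, F (x + T) = F x) -> forall k x, F (x + IZR k * T) = F x.
Proof.
  intros hT k x.
  destruct (Z_le_gt_dec 0 k) as [hk | hk].
  - rewrite <- (Z2Nat.id k hk), <- INR_IZR_INZ. apply periodic_add_INR, hT.
  - assert (ek : IZR k = - INR (Z.to_nat (- k))).
    { rewrite INR_IZR_INZ, Z2Nat.id, opp_IZR by lia. ring. }
    rewrite ek, <- (periodic_add_INR F T hT (Z.to_nat (- k))). f_equal. ring.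
Qed.

Lemma periodic_representative (F : R -> R) (T t s : R) :
  0 < T -> (forall x, F (x + T) = F x) -> exists r, t <= r < t + T /\ F s = F r.
Proof.
  intros hT hper.
  set (k := Int_part ((s - t) / T)).
  destruct (base_Int_part ((s - t) / T)) as [hk1 hk2]. fold k in hk1, hk2.
  exists (s - IZR k * T). split.
  - assert (ediv : (s - t) / T * T = s - t) by (field; lra).
    assert (IZR k * T <= (s - t) / T * T) by (apply Rmult_le_compat_r; lra).
    assert (((s - t) / T - 1) * T < IZR k * T) by (apply Rmult_lt_compat_r; lra).
    nra.
  - rewrite <- (periodic_add_IZR F T hper k (s - IZR k * T)). f_equal. ring.
Qed.

Lemma is_derive_RInt_continuous (f : R -> R) (a y : R) :
  (forall x, continuous f x) -> is_derive (RInt f a) y (f y).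
Proof.
  intro hf. apply (is_derive_RInt f (RInt f a) a y); [| apply hf].
  apply filter_forall. intro b.
  apply (@RInt_correct R_CompleteNormedModule), (@ex_RInt_continuous R_CompleteNormedModule).
  auto.
Qed.

Lemma RInt_0_add_period (g : R -> R) (T u : R) :
  (forall x, continuous g x) -> (forall x, g (x + T) = g x) ->
  RInt g 0 (u + T) = RInt g 0 u + RInt g 0 T.
Proof.
  intros hg hper.
  assert (hex : forall a b, ex_RInt g a b)
    by (intros; apply (@ex_RInt_continuous R_CompleteNormedModule); auto).
  rewrite <- (@RInt_Chasles R_CompleteNormedModule g 0 T (u + T)) by auto.
  assert (eshift : RInt g T (u + T) = RInt g 0 u).
  { replace T with (1 * 0 + T) at 1 by ring. replace (u + T) with (1 * u + T) by ring.
    rewrite <- (@RInt_comp_lin R_CompleteNormedModule) by apply hex.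
    apply RInt_ext. intros x _. unfold scal; simpl; unfold mult; simpl.
    rewrite !Rmult_1_l. apply hper. }
  rewrite eshift. unfold plus; simpl. ring.
Qed.

(* Separation of variables: [Phi (y u) = u] for the primitive [Phi] of [1 / F]
   vanishing at the common initial value, and [Phi] is injective. *)
Lemma autonomous_ode_unique (F y1 y2 : R -> R) :
  (forall x, continuous F x) -> (forall x, 0 < F x) ->
  (forall u, is_derive y1 u (F (y1 u))) -> (forall u, is_derive y2 u (F (y2 u))) ->
  y1 0 = y2 0 -> forall u, y1 u = y2 u.
Proof.
  intros hF Fpos d1 d2 e0 u.
  set (Phi := RInt (fun x => / F x) (y1 0)).
  assert (dPhi : forall x, is_derive Phi x (/ F x)).
  { intro x. apply (is_derive_RInt_continuous (fun x => / F x)). intro z.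
    apply continuous_Rinv_comp; [apply hF | specialize (Fpos z); lra]. }
  assert (hsep : forall y, (forall u, is_derive y u (F (y u))) -> y 0 = y1 0 ->
                 Phi (y u) = u).
  { intros y dy hy0.
    assert (hconst : forall x, is_derive (fun v => Phi (y v) - v) x 0).
    { intro x.
      replace 0 with (F (y x) * / F (y x) - 1) by (field; specialize (Fpos (y x)); lra).
      apply (is_derive_minus (fun v => Phi (y v)) (fun v => v)); [| exact (is_derive_id x)].
      apply (is_derive_comp Phi y); auto. }
    pose proof (derive_zero_eq _ u 0 hconst) as e. simpl in e.
    rewrite hy0 in e. unfold Phi in e |- *. rewrite RInt_point in e. unfold zero in e; simpl in e.
    lra. }
  assert (Phi_incr : forall a b, a < b -> Phi a < Phi b).
  { intros a b hab. apply (derive_pos_lt Phi (fun x => / F x)); auto.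
    intros. apply Rinv_0_lt_compat; auto. }
  pose proof (hsep y1 d1 eq_refl) as h1. pose proof (hsep y2 d2 (eq_sym e0)) as h2.
  destruct (Rtotal_order (y1 u) (y2 u)) as [h | [h | h]]; auto;
    apply Phi_incr in h; lra.
Qed.

Section TurningTangent.

Variables (g1 g2 r phi tau1 tau2 : R -> R) (k U : R).
Hypotheses (k_pos : 0 < k) (U_pos : 0 < U).
Hypothesis r_pos : forall u, 0 < r u.
Hypothesis tau_cross : forall p q, tau1 p * tau2 q - tau2 p * tau1 q = k * sin (q - p).
Hypothesis phi_incr : forall a b, a < b -> phi a < phi b.
Hypothesis phi_add_U : forall u, phi (u + U) = phi u + PI.
Hypothesis g1_derive : forall u, is_derive g1 u (r u * tau1 (phi u)).
Hypothesis g2_derive : forall u, is_derive g2 u (r u * tau2 (phi u)).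
Hypothesis g1_periodic : forall u, g1 (u + 2 * U) = g1 u.
Hypothesis g2_periodic : forall u, g2 (u + 2 * U) = g2 u.

Lemma tau_neq0 p : tau1 p <> 0 \/ tau2 p <> 0.
Proof.
  pose proof (tau_cross p (p + PI / 2)) as h.
  replace (p + PI / 2 - p) with (PI / 2) in h by ring. rewrite sin_PI2 in h.
  destruct (Req_dec (tau1 p) 0) as [e1 | e1]; [| now left].
  destruct (Req_dec (tau2 p) 0) as [e2 | e2]; [| now right].
  rewrite e1, e2 in h. lra.
Qed.

Definition tangent_side (t s : R) : R :=
  tau1 (phi t) * (g2 s - g2 t) - tau2 (phi t) * (g1 s - g1 t).

(* Its derivative in [s] is [k r(s) sin (phi s - phi t)]: positive while the
   tangent turns through the first half-turn, negative through the second. *)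
Lemma tangent_side_pos t s : t < s < t + 2 * U -> 0 < tangent_side t s.
Proof.
  intros hs.
  set (dside := fun s => r s * (k * sin (phi s - phi t))).
  assert (dside_derive : forall x, is_derive (tangent_side t) x (dside x)).
  { intro x. unfold tangent_side, dside. rewrite <- tau_cross.
    assert (ex_derive g1 x) by (eexists; apply g1_derive).
    assert (ex_derive g2 x) by (eexists; apply g2_derive).
    auto_derive; auto.
    rewrite (is_derive_unique _ _ _ (g1_derive x) : Derive (fun y => g1 y) x = _),
      (is_derive_unique _ _ _ (g2_derive x) : Derive (fun y => g2 y) x = _).
    ring. }
  assert (side_t : tangent_side t t = 0) by (unfold tangent_side; ring).
  assert (side_t2U : tangent_side t (t + 2 * U) = 0)
    by (unfold tangent_side; rewrite g1_periodic, g2_periodic; ring).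
  assert (k_r_pos : forall x, 0 < k * r x) by (intro x; apply Rmult_lt_0_compat; auto).
  assert (first_half : forall x, t < x < t + U -> 0 < dside x).
  { intros x hx. specialize (k_r_pos x). unfold dside.
    assert (phi t < phi x < phi t + PI).
    { rewrite <- phi_add_U. split; apply phi_incr; lra. }
    assert (0 < sin (phi x - phi t)) by (apply sin_gt_0; lra).
    nra. }
  assert (second_half : forall x, t + U < x < t + 2 * U -> dside x < 0).
  { intros x hx. specialize (k_r_pos x). unfold dside.
    assert (phi t + PI < phi x < phi t + 2 * PI).
    { replace (phi t + 2 * PI) with (phi t + PI + PI) by ring.
      rewrite <- !phi_add_U. split; apply phi_incr; lra. }
    assert (sin (phi x - phi t) < 0) by (apply sin_lt_0; lra).
    nra. }
  destruct (Rlt_le_dec s (t + U)) as [h | h].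
  - rewrite <- side_t. apply (derive_pos_lt (tangent_side t) dside); [lra | auto |].
    intros x hx. apply first_half. lra.
  - rewrite <- side_t2U. apply (derive_neg_lt (tangent_side t) dside); [lra | auto |].
    intros x hx. apply second_half. lra.
Qed.

Lemma tangent_side_nonneg t s : 0 <= tangent_side t s.
Proof.
  destruct (periodic_representative (tangent_side t) (2 * U) t s) as (s' & hs' & ->); [lra | |].
  - intro x. unfold tangent_side. rewrite g1_periodic, g2_periodic. reflexivity.
  - destruct (Req_dec s' t) as [-> | hne].
    + unfold tangent_side. lra.
    + apply Rlt_le, tangent_side_pos. lra.
Qed.

Hypotheses (r_cont : forall u, continuous r u) (phi_cont : forall u, continuous phi u).
Hypotheses (tau1_cont : forall p, continuous tau1 p) (tau2_cont : forall p, continuous tau2 p).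

Lemma closed_embedded_convex_curve_of_turning_tangent (S : R * R -> Prop) :
  (forall p, S p <-> exists t, p = (g1 t, g2 t)) -> closed_embedded_convex_curve S.
Proof.
  intro hS.
  assert (derive_cont : forall (g tau : R -> R) t,
            (forall u, is_derive g u (r u * tau (phi u))) -> (forall p, continuous tau p) ->
            continuous (Derive g) t).
  { intros g tau t hg htau.
    apply (continuous_ext (fun u => r u * tau (phi u))).
    - intro u. symmetry. apply is_derive_unique, hg.
    - apply (continuous_mult r (fun u => tau (phi u))); auto.
      apply continuous_comp; auto. }
  exists g1, g2, (2 * U). repeat split; auto; try lra.
  - intros s t hs ht e1 e2.
    destruct (Rtotal_order s t) as [h | [h | h]]; auto; exfalso.
    + pose proof (tangent_side_pos s t ltac:(lra)) as hside.
      unfold tangent_side in hside. rewrite e1, e2 in hside. lra.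
    + pose proof (tangent_side_pos t s ltac:(lra)) as hside.
      unfold tangent_side in hside. rewrite e1, e2 in hside. lra.
  - apply hS.
  - apply hS.
  - eexists; apply g1_derive.
  - eexists; apply g2_derive.
  - apply (derive_cont g1 tau1); auto.
  - apply (derive_cont g2 tau2); auto.
  - rewrite !(is_derive_unique _ _ _ (g1_derive t)), (is_derive_unique _ _ _ (g2_derive t)).
    specialize (r_pos t).
    destruct (tau_neq0 (phi t)) as [h | h]; [left | right];
      apply Rmult_integral_contrapositive_currified; lra.
  - intro t. exists (- tau2 (phi t)), (tau1 (phi t)). split.
    + destruct (tau_neq0 (phi t)); [right | left]; lra.
    + intro s. pose proof (tangent_side_nonneg t s). unfold tangent_side in *. lra.
Qed.

End TurningTangent.

Lemma Bang_add_PI l1 l2 p : Bang l1 l2 (p + PI) = Bang l1 l2 p.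
Proof. unfold Bang. rewrite neg_cos, neg_sin. ring. Qed.

Lemma phid_add_PI l1 l2 c th p : phid l1 l2 c th (p + PI) = phid l1 l2 c th p.
Proof. unfold phid. rewrite Bang_add_PI. reflexivity. Qed.

Lemma Bang_pos l1 l2 p : 0 < l1 -> 0 < l2 -> 0 < Bang l1 l2 p.
Proof.
  intros hl1 hl2. unfold Bang. pose proof (sin2_cos2 p) as hsc. unfold Rsqr in hsc.
  destruct (Req_dec (cos p) 0) as [e | ne].
  - assert (sin p ^ 2 = 1) by (rewrite e in hsc; lra).
    assert (0 < l2 ^ 2) by (apply pow_lt; auto). nra.
  - assert (0 < cos p ^ 2) by (apply pow2_gt_0; auto).
    assert (0 < l1 ^ 2) by (apply pow_lt; auto). nra.
Qed.

Lemma Bang_le l1 l2 p : 0 < l2 -> l2 <= l1 -> Bang l1 l2 p <= l1 ^ 2.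
Proof.
  intros hl2 hl21. unfold Bang. pose proof (sin2_cos2 p) as hsc. unfold Rsqr in hsc.
  assert (0 <= (l1 ^ 2 - l2 ^ 2) * sin p ^ 2)
    by (apply Rmult_le_pos; [nra | apply pow2_ge_0]).
  nra.
Qed.

(* The first coordinate of [X12] on the plane [x3 = const], as a function of
   [p = phi u], [q = phi' u] and [A]; the second coordinate is the same
   expression with [(cos x3, sin x3)] replaced by [(sin x3, - cos x3)]. *)
Definition frame (l1 l2 c D cx sx p q A : R) : R :=
  - (1 / ((c ^ 2 + l1 ^ 2 * l2 ^ 2 * D ^ 2) * Bang l1 l2 p)) *
  (1 / l1 * (D * Bang l1 l2 p) * cos p * (c * cx * cosh A - l1 * l2 * D * sx * sinh A)
   - 1 / l1 * (c - q) * sin p * (c * cx * sinh A - l1 * l2 * D * sx * cosh A)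
   - 1 / l2 * (c - q) * cos p * (c * sx * sinh A + l1 * l2 * D * cx * cosh A)
   - 1 / l2 * (D * Bang l1 l2 p) * sin p * (c * sx * cosh A + l1 * l2 * D * cx * sinh A)).

Definition frame_speed (l1 l2 c D p q A : R) : R :=
  (D ^ 2 * Bang l1 l2 p ^ 2 + (c - q) ^ 2) * cosh A / (l1 * l2 * Bang l1 l2 p ^ 2 * D).

Lemma frame_add_PI l1 l2 c D cx sx p q A :
  frame l1 l2 c D cx sx (p + PI) q A = - frame l1 l2 c D cx sx p q A.
Proof. unfold frame. rewrite Bang_add_PI, neg_cos, neg_sin. ring. Qed.

(* The hypothesis on [q'] is what differentiating [q^2 = c^2 + 2 ct B(p) - D^2 B(p)^2]
   along [p' = q] gives once the constant [ct] is eliminated. *)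
Lemma frame_derive (l1 l2 c D cx sx : R) (p q A : R -> R) (u : R) :
  0 < l1 -> 0 < l2 -> 0 < D ->
  is_derive p u (q u) ->
  is_derive q u ((q u ^ 2 - c ^ 2 - D ^ 2 * Bang l1 l2 (p u) ^ 2) / (2 * Bang l1 l2 (p u))
                 * (2 * (l2 ^ 2 - l1 ^ 2) * sin (p u) * cos (p u))) ->
  is_derive A u (D * Bang l1 l2 (p u) + c * (c - q u) / (D * Bang l1 l2 (p u))) ->
  is_derive (fun u => frame l1 l2 c D cx sx (p u) (q u) (A u)) u
    (frame_speed l1 l2 c D (p u) (q u) (A u) * (cx * l2 * sin (p u) + sx * l1 * cos (p u))).
Proof.
  intros hl1 hl2 hD dp dq dA.
  pose proof (Bang_pos l1 l2 (p u) hl1 hl2) as hB.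
  assert (hK : 0 < c ^ 2 + (l1 * l2 * D) ^ 2).
  { assert (0 < (l1 * l2 * D) ^ 2) by (apply pow_lt; repeat apply Rmult_lt_0_compat; lra).
    pose proof (pow2_ge_0 c). lra. }
  unfold frame, frame_speed, Bang in *.
  auto_derive.
  - repeat split; try (eexists; eassumption); try lra.
    simpl in *. apply Rmult_integral_contrapositive_currified; nra.
  - rewrite (is_derive_unique _ _ _ dp : Derive (fun x => p x) u = _),
      (is_derive_unique _ _ _ dq : Derive (fun x => q x) u = _),
      (is_derive_unique _ _ _ dA : Derive (fun x => A x) u = _).
    pose proof (sin2_cos2 (p u)) as hsc. unfold Rsqr in hsc.
    set (sp := sin (p u)) in *. set (cp := cos (p u)) in *.
    set (ch := cosh (A u)). set (sh := sinh (A u)). set (qu := q u).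
    clearbody sp cp ch sh qu.
    set (B := l1 ^ 2 * cp ^ 2 + l2 ^ 2 * sp ^ 2) in *.
    set (K := l1 * l2 * D) in *.
    set (S := sp * sp + cp * cp).
    set (N := D ^ 2 * B ^ 2 + (c - qu) ^ 2).
    (* an intermediate form in which [sp^2 + cp^2] is kept as the symbol [S],
       so that both steps are identities of rational functions *)
    transitivity (- (N / B) / ((c ^ 2 + K ^ 2) * l1 * l2 * B * D) *
       (cx * (l1 * cp * (c * K * (S - 1)) * sh - l2 * sp * (c ^ 2 + K ^ 2 * S) * ch)
        - sx * (l1 * cp * (c ^ 2 + K ^ 2 * S) * ch + l2 * sp * (c * K * (S - 1)) * sh))).
    2: { unfold S. rewrite hsc. field. repeat split; lra. }
    unfold N, S, K, B in *.
    field.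
    replace ((l1 * cp) ^ 2 + (l2 * sp) ^ 2) with (l1 ^ 2 * cp ^ 2 + l2 ^ 2 * sp ^ 2) by ring.
    repeat split; lra.
Qed.

Lemma cosh_pos x : 0 < cosh x.
Proof. unfold cosh. pose proof (exp_pos x). pose proof (exp_pos (- x)). lra. Qed.

Lemma frame_speed_pos l1 l2 c D p q A :
  0 < l1 -> 0 < l2 -> 0 < D -> 0 < frame_speed l1 l2 c D p q A.
Proof.
  intros hl1 hl2 hD. pose proof (Bang_pos l1 l2 p hl1 hl2) as hB.
  unfold frame_speed. apply Rdiv_lt_0_compat.
  - apply Rmult_lt_0_compat; [| apply cosh_pos].
    assert (0 < D ^ 2 * Bang l1 l2 p ^ 2) by (apply Rmult_lt_0_compat; apply pow_lt; lra).
    assert (0 <= (c - q) ^ 2) by apply pow2_ge_0. lra.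
  - repeat apply Rmult_lt_0_compat; try apply pow_lt; lra.
Qed.

Lemma frame_speed_continuous l1 l2 c D (p q A : R -> R) u :
  0 < l1 -> 0 < l2 -> 0 < D -> ex_derive p u -> ex_derive q u -> ex_derive A u ->
  continuous (fun u => frame_speed l1 l2 c D (p u) (q u) (A u)) u.
Proof.
  intros hl1 hl2 hD dp dq dA. pose proof (Bang_pos l1 l2 (p u) hl1 hl2) as hB.
  apply (@ex_derive_continuous R_AbsRing R_NormedModule). unfold frame_speed, Bang in *.
  auto_derive. repeat split; auto. simpl in *.
  repeat apply Rmult_integral_contrapositive_currified; nra.
Qed.

Section Catenoid.

Variables l1 l2 c th : R.
Hypotheses (l2_pos : 0 < l2) (l2_le_l1 : l2 <= l1) (c_pos : 0 < c).
Hypotheses (th_pos : 0 < th) (th_lt_PI2 : th < PI / 2) (th_lt_theta_plus : th < theta_plus l1 c).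

Let l1_pos : 0 < l1.
Proof. lra. Qed.

Lemma Dc_pos : 0 < Dc c th.
Proof. unfold Dc. apply Rdiv_lt_0_compat; auto. apply sin_gt_0; lra. Qed.

Lemma theta_plus_bound : l1 ^ 2 * (1 - cos th) < c ^ 2.
Proof.
  assert (sqrt2_pos : 0 < sqrt 2 * l1) by (apply Rmult_lt_0_compat; [apply sqrt_lt_R0 |]; lra).
  assert (sqrt2_sq : (sqrt 2 * l1) ^ 2 = 2 * l1 ^ 2).
  { replace ((sqrt 2 * l1) ^ 2) with (sqrt 2 * sqrt 2 * l1 ^ 2) by ring.
    rewrite sqrt_sqrt; lra. }
  assert (cos_th_pos : 0 < cos th) by (apply cos_gt_0; lra).
  assert (hl1 : 0 < l1 ^ 2) by (apply pow_lt; lra).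
  unfold theta_plus in th_lt_theta_plus.
  destruct (Rlt_dec (sqrt 2 * l1) c) as [hc | hc].
  - assert (2 * l1 ^ 2 < c ^ 2) by nra. nra.
  - assert (hc2 : c ^ 2 <= 2 * l1 ^ 2) by nra.
    set (y := 1 - c ^ 2 / l1 ^ 2) in *.
    assert (ey : c ^ 2 = (1 - y) * l1 ^ 2) by (unfold y; field; lra).
    assert (hy : -1 <= y <= 1) by (split; nra).
    pose proof (acos_bound y) as hacos.
    assert (cos (acos y) < cos th) by (apply cos_decreasing_1; lra).
    rewrite cos_acos in * by auto. nra.
Qed.

(* As [D c = sin th], [c^2] times the radicand is [(c^2 + l1^2 cos th)^2 - l1^4]. *)
Lemma radicand_at_l1_pos :
  0 < c ^ 2 + 2 * cos th * l1 ^ 2 - Dc c th ^ 2 * (l1 ^ 2) ^ 2.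
Proof.
  pose proof theta_plus_bound as hbound.
  assert (cos_th_pos : 0 < cos th) by (apply cos_gt_0; lra).
  assert (hD : Dc c th ^ 2 * c ^ 2 = 1 - cos th ^ 2).
  { unfold Dc. pose proof (sin2_cos2 th) as hsc. unfold Rsqr in hsc. field_simplify; nra. }
  assert (hc2 : 0 < c ^ 2) by (apply pow_lt; lra).
  assert (hl1 : 0 < l1 ^ 2) by (apply pow_lt; lra).
  apply Rmult_lt_reg_r with (c ^ 2); auto. rewrite Rmult_0_l.
  replace ((c ^ 2 + 2 * cos th * l1 ^ 2 - Dc c th ^ 2 * (l1 ^ 2) ^ 2) * c ^ 2)
    with ((c ^ 2 + cos th * l1 ^ 2) ^ 2 - (1 - cos th ^ 2) * (l1 ^ 2) ^ 2 - (cos th * l1 ^ 2) ^ 2)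
    by (rewrite <- hD; ring).
  nra.
Qed.

(* The radicand is concave in [B = Bang p], which ranges in [(0, l1^2]],
   and it is positive at both ends. *)
Lemma radicand_pos p :
  0 < c ^ 2 + 2 * cos th * Bang l1 l2 p - Dc c th ^ 2 * Bang l1 l2 p ^ 2.
Proof.
  pose proof radicand_at_l1_pos as hL.
  pose proof (Bang_pos l1 l2 p l1_pos l2_pos) as hB.
  pose proof (Bang_le l1 l2 p l2_pos l2_le_l1) as hBL.
  set (B := Bang l1 l2 p) in *. set (L := l1 ^ 2) in *. set (D := Dc c th) in *.
  assert (hD2 : 0 <= D ^ 2) by apply pow2_ge_0.
  assert (hc2 : 0 < c ^ 2) by (apply pow_lt; auto).
  assert (D ^ 2 * B ^ 2 <= D ^ 2 * B * L).
  { replace (D ^ 2 * B ^ 2) with (D ^ 2 * B * B) by ring.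
    apply Rmult_le_compat_l; [apply Rmult_le_pos |]; lra. }
  destruct (Rle_dec 0 (2 * cos th - D ^ 2 * L)); nra.
Qed.

Lemma phid_pos p : 0 < phid l1 l2 c th p.
Proof. apply sqrt_lt_R0, radicand_pos. Qed.

Lemma phid_ex_derive p : ex_derive (phid l1 l2 c th) p.
Proof.
  pose proof (radicand_pos p) as hR. unfold phid, Bang, Dc in *.
  auto_derive. simpl in *. lra.
Qed.

Variables (phi : R -> R) (U : R).
Hypotheses (phi_sol : is_phi_sol l1 l2 c th phi) (U_pos : 0 < U) (phi_U : phi U = PI).

Let phi_derive u : is_derive phi u (phid l1 l2 c th (phi u)).
Proof. apply phi_sol. Qed.

Let phi_ex_derive u : ex_derive phi u.
Proof. eexists; apply phi_derive. Qed.

Lemma phi_incr a b : a < b -> phi a < phi b.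
Proof.
  intro hab. apply (derive_pos_lt phi (fun u => phid l1 l2 c th (phi u))); auto.
  intros; apply phid_pos.
Qed.

(* [u -> phi (u + U) - PI] solves the same autonomous ODE, whose right-hand side
   is [PI]-periodic, with the same initial value. *)
Lemma phi_add_U u : phi (u + U) = phi u + PI.
Proof.
  enough (phi (u + U) - PI = phi u) by lra.
  apply (autonomous_ode_unique (phid l1 l2 c th) (fun v => phi (v + U) - PI) phi).
  - intro p. apply (@ex_derive_continuous R_AbsRing R_NormedModule), phid_ex_derive.
  - apply phid_pos.
  - intro v. rewrite <- phid_add_PI. replace (phi (v + U) - PI + PI) with (phi (v + U)) by ring.
    auto_derive; auto.
    rewrite (is_derive_unique _ _ _ (phi_derive (v + U)) : Derive (fun x => phi x) (v + U) = _).
    ring.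
  - exact phi_derive.
  - rewrite Rplus_0_l, phi_U, (proj1 phi_sol). ring.
Qed.

Lemma phid_phi_derive u :
  is_derive (fun u => phid l1 l2 c th (phi u)) u
    ((phid l1 l2 c th (phi u) ^ 2 - c ^ 2 - Dc c th ^ 2 * Bang l1 l2 (phi u) ^ 2)
       / (2 * Bang l1 l2 (phi u))
     * (2 * (l2 ^ 2 - l1 ^ 2) * sin (phi u) * cos (phi u))).
Proof.
  pose proof (radicand_pos (phi u)) as hR.
  pose proof (Bang_pos l1 l2 (phi u) l1_pos l2_pos) as hB.
  pose proof (sqrt_lt_R0 _ hR) as hq.
  pose proof (phi_derive u) as dphi.
  unfold phid, Bang in *.
  auto_derive; [split; auto; simpl in *; lra |].
  rewrite (is_derive_unique _ _ _ dphi : Derive (fun x => phi x) u = _).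
  rewrite pow2_sqrt by lra.
  simpl in *. unfold Rminus in *. set (q := sqrt _) in *.
  field. lra.
Qed.

Let ff_integrand_continuous s : continuous (fun s => Dc c th * Bu l1 l2 phi s) s.
Proof.
  apply (@ex_derive_continuous R_AbsRing R_NormedModule). unfold Bu, Bang.
  auto_derive. auto.
Qed.

Let GG_integrand_continuous s :
  continuous (fun s => (c - phid l1 l2 c th (phi s)) / Bu l1 l2 phi s) s.
Proof.
  pose proof (Bang_pos l1 l2 (phi s) l1_pos l2_pos) as hB.
  apply (@ex_derive_continuous R_AbsRing R_NormedModule). unfold Bu, Bang in *.
  auto_derive. repeat split; auto using phid_ex_derive. simpl in *. lra.
Qed.

Lemma ff_derive u : is_derive (ff l1 l2 c th phi) u (Dc c th * Bang l1 l2 (phi u)).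
Proof. apply (is_derive_RInt_continuous (fun s => Dc c th * Bu l1 l2 phi s)); auto. Qed.

Lemma GG_derive u :
  is_derive (GG l1 l2 c th phi) u ((c - phid l1 l2 c th (phi u)) / Bang l1 l2 (phi u)).
Proof.
  apply (is_derive_RInt_continuous (fun s => (c - phid l1 l2 c th (phi s)) / Bu l1 l2 phi s)).
  auto.
Qed.

Lemma ff_add_U u : ff l1 l2 c th phi (u + U) = ff l1 l2 c th phi u + ff l1 l2 c th phi U.
Proof.
  apply RInt_0_add_period; auto.
  intro s. unfold Bu. rewrite phi_add_U, Bang_add_PI. reflexivity.
Qed.

Lemma GG_add_U u : GG l1 l2 c th phi (u + U) = GG l1 l2 c th phi u + GG l1 l2 c th phi U.
Proof.
  apply RInt_0_add_period; auto.
  intro s. unfold Bu. rewrite phi_add_U, Bang_add_PI, phid_add_PI. reflexivity.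
Qed.

Hypothesis H_zero : HH l1 l2 c th phi U = 0.
Variable mu : R.

Definition slice_v (u : R) : R := (GG l1 l2 c th phi u - mu) / Dc c th.

Definition slice_A (u : R) : R := ff l1 l2 c th phi u + c * slice_v u.

Definition slice_frame (a b u : R) : R :=
  frame l1 l2 c (Dc c th) a b (phi u) (phid l1 l2 c th (phi u)) (slice_A u).

Definition slice_speed (u : R) : R :=
  frame_speed l1 l2 c (Dc c th) (phi u) (phid l1 l2 c th (phi u)) (slice_A u).

Lemma X3_eq_iff u v : X3 l1 l2 c th phi u v = l1 * l2 * mu <-> v = slice_v u.
Proof.
  pose proof Dc_pos as hD.
  assert (hK : 0 < l1 * l2 * Dc c th)
    by (pose proof l1_pos; apply Rmult_lt_0_compat; [nra | exact hD]).
  assert (e : X3 l1 l2 c th phi u v - l1 * l2 * mu = - (l1 * l2 * Dc c th) * (v - slice_v u))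
    by (unfold X3, slice_v; field; lra).
  split; intro h.
  - assert (h0 : - (l1 * l2 * Dc c th) * (v - slice_v u) = 0) by lra.
    apply Rmult_integral in h0. lra.
  - subst v. lra.
Qed.

Lemma X12_slice u :
  X12 l1 l2 c th phi u (slice_v u)
  = (slice_frame (cos (l1 * l2 * mu)) (sin (l1 * l2 * mu)) u,
     slice_frame (sin (l1 * l2 * mu)) (- cos (l1 * l2 * mu)) u).
Proof.
  unfold X12. cbv zeta. rewrite (proj2 (X3_eq_iff u _) eq_refl).
  unfold slice_frame, frame, slice_A, Bu. f_equal; ring.
Qed.

(* [H(c, th) = 0] is exactly what closes the curve up. *)
Lemma slice_A_add_U u : slice_A (u + U) = slice_A u.
Proof.
  pose proof Dc_pos as hD. unfold HH in H_zero.
  unfold slice_A, slice_v. rewrite ff_add_U, GG_add_U.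
  apply Rminus_diag_uniq.
  transitivity ((Dc c th * ff l1 l2 c th phi U + c * GG l1 l2 c th phi U) / Dc c th);
    [field | rewrite H_zero; field]; lra.
Qed.

Lemma slice_A_derive u :
  is_derive slice_A u
    (Dc c th * Bang l1 l2 (phi u)
     + c * (c - phid l1 l2 c th (phi u)) / (Dc c th * Bang l1 l2 (phi u))).
Proof.
  pose proof Dc_pos as hD. pose proof (Bang_pos l1 l2 (phi u) l1_pos l2_pos) as hB.
  unfold slice_A, slice_v.
  assert (ex_derive (ff l1 l2 c th phi) u) by (eexists; apply ff_derive).
  assert (ex_derive (GG l1 l2 c th phi) u) by (eexists; apply GG_derive).
  auto_derive; [repeat split; auto; lra |].
  rewrite (is_derive_unique _ _ _ (ff_derive u) : Derive (fun x => ff l1 l2 c th phi x) u = _),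
    (is_derive_unique _ _ _ (GG_derive u) : Derive (fun x => GG l1 l2 c th phi x) u = _).
  field. lra.
Qed.

Lemma slice_frame_add_U a b u : slice_frame a b (u + U) = - slice_frame a b u.
Proof.
  unfold slice_frame. rewrite phi_add_U, phid_add_PI, slice_A_add_U. apply frame_add_PI.
Qed.

Lemma slice_frame_derive a b u :
  is_derive (slice_frame a b) u (slice_speed u * (a * l2 * sin (phi u) + b * l1 * cos (phi u))).
Proof.
  apply (frame_derive l1 l2 c (Dc c th) a b phi (fun u => phid l1 l2 c th (phi u)) slice_A);
    auto using Dc_pos, phid_phi_derive, slice_A_derive.
Qed.

Lemma slice_closed_embedded_convex :
  closed_embedded_convex_curve (slice l1 l2 c th phi (l1 * l2 * mu)).
Proof.
  set (cx := cos (l1 * l2 * mu)). set (sx := sin (l1 * l2 * mu)).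
  assert (hcs : cx * cx + sx * sx = 1).
  { pose proof (sin2_cos2 (l1 * l2 * mu)) as h. unfold Rsqr in h. unfold cx, sx. lra. }
  assert (periodic : forall a b u, slice_frame a b (u + 2 * U) = slice_frame a b u).
  { intros. replace (u + 2 * U) with (u + U + U) by ring. rewrite !slice_frame_add_U. ring. }
  apply (closed_embedded_convex_curve_of_turning_tangent
           (slice_frame cx sx) (slice_frame sx (- cx)) slice_speed phi
           (fun p => cx * l2 * sin p + sx * l1 * cos p)
           (fun p => sx * l2 * sin p + - cx * l1 * cos p) (l1 * l2) U);
    auto using phi_incr, phi_add_U, slice_frame_derive.
  - apply Rmult_lt_0_compat; lra.
  - intro u. apply frame_speed_pos; auto using Dc_pos.
  - intros p q. rewrite sin_minus.
    transitivity ((cx * cx + sx * sx) * (l1 * l2 * (sin q * cos p - cos q * sin p))); [ring |].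
    rewrite hcs. ring.
  - intro u. apply frame_speed_continuous; auto using Dc_pos.
    + eexists; apply phid_phi_derive.
    + eexists; apply slice_A_derive.
  - intro u. apply (@ex_derive_continuous R_AbsRing R_NormedModule). auto.
  - intro p. apply (@ex_derive_continuous R_AbsRing R_NormedModule). auto_derive. auto.
  - intro p. apply (@ex_derive_continuous R_AbsRing R_NormedModule). auto_derive. auto.
  - intros [x1 x2]. unfold slice. split.
    + intros (u & v & e3 & e12). exists u.
      apply X3_eq_iff in e3. subst v. rewrite <- e12, X12_slice. reflexivity.
    + intros (u & e). exists u, (slice_v u). split.
      * apply X3_eq_iff. reflexivity.
      * rewrite X12_slice, e. reflexivity.
Qed.

End Catenoid.

Theorem proposition5p5 (l1 l2 c th U : R) (phi : R -> R) :
  ((l1 > l2 /\ l2 > 0) \/ (l1 = 1 /\ l2 = 1)) ->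
  0 < c ->
  (* th = theta~_c : th in (0, pi/2) /\ (0, theta_c^+) with H(c, th) = 0 *)
  0 < th < PI / 2 -> th < theta_plus l1 c ->
  is_phi_sol l1 l2 c th phi ->
  0 < U -> phi U = PI ->
  HH l1 l2 c th phi U = 0 ->
  forall mu : R,
    closed_embedded_convex_curve (slice l1 l2 c th phi (l1 * l2 * mu)).
Proof.
  intros hl hc [hth0 hth1] htp hphi hU hphiU hH mu.
  assert (hl2 : 0 < l2) by (destruct hl; lra).
  assert (hl21 : l2 <= l1) by (destruct hl; lra).
  apply slice_closed_embedded_convex with U; auto.
Qed.
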